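(* Consider the Diophantine equation $n^2-(6s-1)n+6s^2=0$ in positive integers $(n,s)$. The maps $\iota_1(n,s)=(n,n-s)$ and $\iota_2(n,s)=(6s-1-n,s)$ send positive integer solutions to positive integer solutions, and the set of all positive integer solutions is exactly the set of pairs obtained from $(2,1)$ by finitely many applications of $\iota_1$ and $\iota_2$; that is, the solutions are $(2,1),(3,1),(3,2),(8,2),(8,6),(27,6),(27,21),(98,21),(98,77),(363,77),(363,286),\dots$, obtained by alternately applying $\iota_2$ and $\iota_1$ starting from $(2,1)$. *)

From Stdlib Require Import ZArith List Lia.
Open Scope Z_scope.

Definition sol (p : Z * Z) : Prop :=
  let (n, s) := p in
  0 < n /\ 0 < s /\ n ^ 2 - (6 * s - 1) * n + 6 * s ^ 2 = 0.

Definition iota1 (p : Z * Z) : Z * Z := (fst p, fst p - snd p).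

Definition iota2 (p : Z * Z) : Z * Z := (6 * snd p - 1 - fst p, snd p).

(* Apply a finite word of involutions: true = iota1, false = iota2;
   the head of the list is applied last. *)
Fixpoint apply_word (w : list bool) (p : Z * Z) : Z * Z :=
  match w with
  | nil => p
  | b :: w' => (if b then iota1 else iota2) (apply_word w' p)
  end.

Fixpoint alt (k : nat) : Z * Z :=
  match k with
  | O => (2, 1)
  | S k' => (if Nat.even k' then iota2 else iota1) (alt k')
  end.

(* Vieta jumping.  For fixed s the equation is a monic quadratic in n whose
   roots sum to 6s - 1, so iota2 swaps the two roots; read as
   s^2 - n s + n(n + 1)/6 = 0, a quadratic in s with roots summing to n, the
   same holds for iota1.  Both involutions therefore preserve positive
   solutions, and on every solution other than (2, 1) one of them strictly
   decreases n + s: if n < 2s then n - s < s, and otherwise n >= 3s (the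
   equation has no solutions with 2s <= n < 3s besides (2, 1)), so that
   6s - 1 - n < n.  Descending to (2, 1) and retracing the steps shows that
   every solution lies on the alternating orbit of (2, 1). *)
From Stdlib Require Import ZArith List Lia Wf_nat.
Open Scope Z_scope.

Definition iota (b : bool) : Z * Z -> Z * Z := if b then iota1 else iota2.

Lemma sol_iota1 p : sol p -> sol (iota1 p).
Proof.
  destruct p as [n s]; intros [Hn [Hs E]]; unfold iota1, sol; cbn [fst snd].
  rewrite !Z.pow_2_r in *.
  assert (Hsn : s < n) by nia.
  repeat split; nia.
Qed.

Lemma sol_iota2 p : sol p -> sol (iota2 p).
Proof.
  destruct p as [n s]; intros [Hn [Hs E]]; unfold iota2, sol; cbn [fst snd].
  rewrite !Z.pow_2_r in *.
  assert (Hn6 : n < 6 * s - 1) by nia.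
  repeat split; nia.
Qed.

Lemma sol_iota b p : sol p -> sol (iota b p).
Proof. destruct b; [apply sol_iota1 | apply sol_iota2]. Qed.

Lemma iota_involutive b p : iota b (iota b p) = p.
Proof. destruct b, p; unfold iota, iota1, iota2; cbn; f_equal; lia. Qed.

Lemma sol_apply_word w p : sol p -> sol (apply_word w p).
Proof. intros Hp; induction w as [|b w IH]; [exact Hp | exact (sol_iota b _ IH)]. Qed.

Lemma sol_base : sol (2, 1).
Proof. unfold sol; lia. Qed.

Lemma alt_S k : alt (S k) = iota (Nat.odd k) (alt k).
Proof. cbn [alt]; unfold Nat.odd; now destruct (Nat.even k). Qed.

Lemma alt_word k : exists w, alt k = apply_word w (2, 1).
Proof.
  induction k as [|k [w Hw]]; [now exists nil|].
  exists (Nat.odd k :: w); rewrite alt_S, Hw; reflexivity.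
Qed.

(* One involution moves forward along the orbit, the other one backward,
   except at (2, 1), which iota1 fixes. *)
Lemma iota_alt b k : exists j, iota b (alt k) = alt j.
Proof.
  destruct (Bool.bool_dec b (Nat.odd k)) as [-> | Hb].
  - exists (S k); now rewrite alt_S.
  - destruct k as [|k].
    + exists O; destruct b; [reflexivity | now contradict Hb].
    + exists k; rewrite alt_S.
      replace b with (Nat.odd k); [apply iota_involutive|].
      rewrite Nat.odd_succ, <- Nat.negb_odd in Hb.
      destruct b, (Nat.odd k); cbn in Hb |- *; congruence.
Qed.

Definition size (p : Z * Z) : nat := Z.to_nat (fst p + snd p).

Lemma sol_lt_2s_3s n s : sol (n, s) -> 2 * s <= n < 3 * s -> (n, s) = (2, 1).
Proof.
  intros [Hn [Hs E]] Hns; rewrite !Z.pow_2_r in E.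
  (* E reads (n - 2s)(n - 3s) = n(s - 1), whose sides have opposite signs here. *)
  assert (Hn2 : n = 2 * s) by nia.
  subst n; f_equal; nia.
Qed.

Lemma sol_descent p : sol p -> p = (2, 1) \/ exists b, (size (iota b p) < size p)%nat.
Proof.
  destruct p as [n s]; intros Hp.
  pose proof Hp as [Hn [Hs _]].
  unfold size.
  destruct (Z_lt_le_dec n (2 * s)) as [Hlt | Hge].
  - right; exists true; cbn [iota iota1 fst snd]; lia.
  - destruct (Z_lt_le_dec n (3 * s)) as [H3 | H3].
    + left; exact (sol_lt_2s_3s n s Hp (conj Hge H3)).
    + right; exists false; cbn [iota iota2 fst snd]; lia.
Qed.

Lemma sol_alt p : sol p -> exists k, p = alt k.
Proof.
  induction p as [p IH] using (induction_ltof1 _ size); intros Hp.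
  destruct (sol_descent p Hp) as [-> | [b Hb]]; [now exists O|].
  destruct (IH (iota b p) Hb (sol_iota b p Hp)) as [k Hk].
  destruct (iota_alt b k) as [j Hj].
  exists j; rewrite <- Hj, <- Hk; symmetry; apply iota_involutive.
Qed.

Theorem mainTheorem10 :
  (forall p : Z * Z, sol p -> sol (iota1 p)) /\
  (forall p : Z * Z, sol p -> sol (iota2 p)) /\
  (forall p : Z * Z, sol p <-> exists w : list bool, p = apply_word w (2, 1)) /\
  (forall p : Z * Z, sol p <-> exists k : nat, p = alt k).
Proof.
  split; [exact sol_iota1|]; split; [exact sol_iota2|]; split; intros p; split.
  - intros Hp; destruct (sol_alt p Hp) as [k ->]; apply alt_word.
  - intros [w ->]; exact (sol_apply_word w _ sol_base).
  - apply sol_alt.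
  - intros [k ->]; destruct (alt_word k) as [w ->]; exact (sol_apply_word w _ sol_base).
Qed.
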